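(* Let $X_1,\dots,X_n$ be features and $Y$ a target that is not a.s. constant, $\mathcal{F}=\{1,\dots,n\}$. If $Y=g(X_k)$ almost surely for some function $g$ and some $k\in\mathcal{F}$ (i.e. feature $k$ is fully informative), then $\mathrm{FI}(i)\le\mathrm{FI}(k)$ for every $i\in\mathcal{F}$.
   Context: All random variables are discrete with finite support and defined on a common probability space. For discrete random variables (or random vectors) $X$ and $Y$, define $$\mathrm{UD}(X,Y):=\sum_x p_X(x)\sum_y \bigl|p_{Y\mid X=x}(y)-p_Y(y)\bigr|,$$ and, when $Y$ is not almost surely constant, $\mathrm{Dep}(X,Y):=\mathrm{UD}(X,Y)/\mathrm{UD}(Y,Y)$. Given features $X_1,\dots,X_n$ with index set $\mathcal{F}=\{1,\dots,n\}$ and $S\subseteq\mathcal{F}$, write $X_S=(X_i)_{i\in S}$ ($X_\emptyset$ constant) and $\mathrm{Dep}(S,Y):=\mathrm{Dep}(X_S,Y)$. The Berkelmans–Pries feature importance is $$\mathrm{FI}(i):=\sum_{S\subseteq\mathcal{F}\setminus\{i\}}\frac{|S|!\,(n-|S|-1)!}{n!}\bigl(\mathrm{Dep}(S\cup\{i\},Y)-\mathrm{Dep}(S,Y)\bigr).$$ *)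

From HB Require Import structures.
From mathcomp Require Import all_boot all_order all_algebra.
Set Implicit Arguments. Unset Strict Implicit. Unset Printing Implicit Defensive.
Import Order.TTheory GRing.Theory Num.Theory.
Local Open Scope ring_scope.

Definition is_prob (R : realFieldType) (Om : finType) (P : Om -> R) : Prop :=
  (forall w, 0 <= P w) /\ \sum_(w : Om) P w = 1.

Definition pmf (R : realFieldType) (Om : finType) (P : Om -> R)
  (A : finType) (X : Om -> A) (x : A) : R :=
  \sum_(w : Om | X w == x) P w.

Definition jpmf (R : realFieldType) (Om : finType) (P : Om -> R)
  (A B : finType) (X : Om -> A) (Y : Om -> B) (x : A) (y : B) : R :=
  \sum_(w : Om | (X w == x) && (Y w == y)) P w.

(* UD(X,Y) = sum_x p_X(x) sum_y |p_{Y|X=x}(y) - p_Y(y)|, with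
   p_{Y|X=x}(y) = P(X=x,Y=y)/P(X=x).  Terms with p_X(x) = 0 contribute 0. *)
Definition UD (R : realFieldType) (Om : finType) (P : Om -> R)
  (A B : finType) (X : Om -> A) (Y : Om -> B) : R :=
  \sum_(x : A) pmf P X x *
     \sum_(y : B) `| jpmf P X Y x y / pmf P X x - pmf P Y y |.

Definition Dep (R : realFieldType) (Om : finType) (P : Om -> R)
  (A B : finType) (X : Om -> A) (Y : Om -> B) : R :=
  UD P X Y / UD P Y Y.

(* The random vector X_S = (X_i)_{i in S}, encoded as a dependent finite
   function whose i-th component is Some (X_i w) for i in S and None
   otherwise (X_emptyset is constant). *)
Definition XS (Om : finType) (n : nat) (T : 'I_n -> finType)
  (X : forall i : 'I_n, Om -> T i) (S : {set 'I_n}) (w : Om)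
  : {dffun forall i : 'I_n, option (T i)} :=
  [ffun i => if i \in S then Some (X i w) else None].

Definition DepS (R : realFieldType) (Om : finType) (P : Om -> R)
  (n : nat) (T : 'I_n -> finType) (X : forall i : 'I_n, Om -> T i)
  (B : finType) (Y : Om -> B) (S : {set 'I_n}) : R :=
  Dep P (XS X S) Y.

Definition FI (R : realFieldType) (Om : finType) (P : Om -> R)
  (n : nat) (T : 'I_n -> finType) (X : forall i : 'I_n, Om -> T i)
  (B : finType) (Y : Om -> B) (i : 'I_n) : R :=
  \sum_(S : {set 'I_n} | i \notin S)
     ((#|S|`! * (n - #|S| - 1)`!)%:R / (n`!)%:R) *
     (DepS P X Y (S :|: [set i]) - DepS P X Y S).

From HB Require Import structures.
From mathcomp Require Import all_boot all_order all_algebra.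
From mathcomp Require Import ring lra.
Set Implicit Arguments. Unset Strict Implicit. Unset Printing Implicit Defensive.
Import Order.TTheory GRing.Theory Num.Theory.
Local Open Scope ring_scope.

(* Write p(x,y), p(x), q(y) for the joint and marginal masses of (X,Y).
   1. UD(X,Y) = sum_y sum_x |p(x,y) - p(x) q(y)|, and each summand is at most
      p(x,y)(1 - q(y)) + (p(x) - p(x,y)) q(y), with equality whenever
      p(x,y) is 0 or p(x).  Summing over x, UD(X,Y) <= UDmax(Y) where
      UDmax(Y) = sum_y 2 q(y)(1 - q(y)) depends on Y only, with equality
      when Y is almost surely a function of X (then p(x,y) is 0 or p(x)).
   2. Hence UD(Y,Y) = UDmax(Y) > 0 when Y is not a.s. constant, so
      Dep(S,Y) <= 1 for every S, and Dep(S,Y) = 1 as soon as k is in S.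
   3. Grouping the coalitions not containing i in pairs {S, S+k} (for S
      avoiding i and k) and those not containing k in pairs {S, S+i}, both
      FI(i) and FI(k) become sums over S avoiding i and k; the S+k term of
      FI(i) vanishes by step 2, and the remaining terms compare pointwise
      since Dep(S+i) <= 1 = Dep(S+k) and |S+i| = |S+k|. *)

Section UniversalDependence.
Variables (R : realFieldType) (Om : finType) (P : Om -> R).
Hypothesis P_ge0 : forall w, 0 <= P w.

Lemma pmf_ge0 (A : finType) (X : Om -> A) x : 0 <= pmf P X x.
Proof. exact: sumr_ge0. Qed.

Lemma jpmf_ge0 (A B : finType) (X : Om -> A) (Y : Om -> B) x y :
  0 <= jpmf P X Y x y.
Proof. exact: sumr_ge0. Qed.

Lemma sum_sub_le (Q Q' : pred Om) :
  \sum_(w | Q w && Q' w) P w <= \sum_(w | Q w) P w.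
Proof. by rewrite [leRHS](bigID Q') lerDl; apply: sumr_ge0. Qed.

Lemma jpmf_le_pmf (A B : finType) (X : Om -> A) (Y : Om -> B) x y :
  jpmf P X Y x y <= pmf P X x.
Proof. exact: sum_sub_le. Qed.

Lemma sum_pmf_partition (A : finType) (X : Om -> A) (Q : pred Om) :
  \sum_x \sum_(w | (X w == x) && Q w) P w = \sum_(w | Q w) P w.
Proof.
rewrite (partition_big X xpredT) //=.
by apply: eq_bigr => x _; apply: eq_bigl => w; rewrite andbC.
Qed.

Lemma sum_pmf (A : finType) (X : Om -> A) : \sum_x pmf P X x = \sum_w P w.
Proof.
rewrite -(sum_pmf_partition X predT).
by apply: eq_bigr => x _; apply: eq_bigl => w; rewrite andbT.
Qed.

Lemma sum_jpmf (A B : finType) (X : Om -> A) (Y : Om -> B) y :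
  \sum_x jpmf P X Y x y = pmf P Y y.
Proof. exact: (sum_pmf_partition X (fun w => Y w == y)). Qed.

Lemma UD_joint (A B : finType) (X : Om -> A) (Y : Om -> B) :
  UD P X Y = \sum_y \sum_x `|jpmf P X Y x y - pmf P X x * pmf P Y y|.
Proof.
rewrite exchange_big; apply: eq_bigr => x _; rewrite mulr_sumr.
apply: eq_bigr => y _.
have px_ge0 := pmf_ge0 X x.
have [px0|px_neq0] := eqVneq (pmf P X x) 0.
  have -> : jpmf P X Y x y = 0.
    by apply/le_anti; rewrite jpmf_ge0 -px0 jpmf_le_pmf.
  by rewrite px0 !mul0r subr0 normr0.
rewrite -(ger0_norm px_ge0) -normrM; congr `|_|.
by rewrite ger0_norm //; field.
Qed.

(* The maximal value of UD(., Y): sum_y 2 q(y)(1 - q(y)). *)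
Definition UDmax (B : finType) (Y : Om -> B) : R :=
  \sum_y (pmf P Y y * (1 - pmf P Y y) + (1 - pmf P Y y) * pmf P Y y).

Lemma summand_le (j p q : R) : 0 <= j -> j <= p -> 0 <= q -> q <= 1 ->
  `|j - p * q| <= j * (1 - q) + (p - j) * q.
Proof. by move=> *; rewrite ler_norml; apply/andP; split; nra. Qed.

Lemma summand_eq (j p q : R) : 0 <= p -> 0 <= q -> q <= 1 ->
  j = 0 \/ j = p -> `|j - p * q| = j * (1 - q) + (p - j) * q.
Proof.
move=> p_ge0 q_ge0 q_le1 [->|->].
  by rewrite sub0r normrN ger0_norm; [ring | apply: mulr_ge0; lra].
have pq_ge0 : 0 <= p * (1 - q) by apply: mulr_ge0; lra.
by rewrite ger0_norm; [ring | lra].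
Qed.

Hypothesis P_sum1 : \sum_w P w = 1.

Lemma pmf_le1 (A : finType) (X : Om -> A) x : pmf P X x <= 1.
Proof. by rewrite -P_sum1; exact: (sum_sub_le predT (fun w => X w == x)). Qed.

Lemma sum_summand_bound (A B : finType) (X : Om -> A) (Y : Om -> B) y :
  \sum_x (jpmf P X Y x y * (1 - pmf P Y y)
          + (pmf P X x - jpmf P X Y x y) * pmf P Y y)
  = pmf P Y y * (1 - pmf P Y y) + (1 - pmf P Y y) * pmf P Y y.
Proof. by rewrite big_split /= -!mulr_suml sumrB sum_jpmf sum_pmf P_sum1. Qed.

Lemma UD_le_max (A B : finType) (X : Om -> A) (Y : Om -> B) :
  UD P X Y <= UDmax Y.
Proof.
rewrite UD_joint; apply: ler_sum => y _; rewrite -(sum_summand_bound X).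
apply: ler_sum => x _; apply: summand_le;
  by [apply: jpmf_ge0 | apply: jpmf_le_pmf | apply: pmf_ge0 | apply: pmf_le1].
Qed.

Lemma jpmf_functional (A B : finType) (X : Om -> A) (Y : Om -> B) :
  (forall w w', 0 < P w -> 0 < P w' -> X w = X w' -> Y w = Y w') ->
  forall x y, jpmf P X Y x y = 0 \/ jpmf P X Y x y = pmf P X x.
Proof.
move=> Yfun x y.
have P_null w : ~~ (0 < P w) -> P w = 0.
  by move=> Pw; apply/le_anti; rewrite P_ge0 andbT leNgt.
have [/existsP [w0 /and3P [/eqP Xw0 /eqP Yw0 Pw0]] | none] :=
  boolP [exists w, [&& X w == x, Y w == y & 0 < P w]].
  right; rewrite /pmf (bigID (fun w => Y w == y)) /=.
  rewrite [X in _ = _ + X]big1 ?addr0 // => w /andP [/eqP Xw Yw].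
  apply: P_null; apply: contra Yw => Pw.
  by rewrite (Yfun w w0) // ?Xw0 ?Yw0 // Xw.
left; apply: big1 => w /andP [Xw Yw]; apply: P_null.
by apply: contraNN none => Pw; apply/existsP; exists w; rewrite Xw Yw.
Qed.

Lemma UD_eq_max (A B : finType) (X : Om -> A) (Y : Om -> B) :
  (forall w w', 0 < P w -> 0 < P w' -> X w = X w' -> Y w = Y w') ->
  UD P X Y = UDmax Y.
Proof.
move=> /jpmf_functional Jfun.
rewrite UD_joint; apply: eq_bigr => y _; rewrite -(sum_summand_bound X).
by apply: eq_bigr => x _; apply: summand_eq;
  [apply: pmf_ge0 | apply: pmf_ge0 | apply: pmf_le1 | apply: Jfun].
Qed.

Lemma UDmax_gt0 (B : finType) (Y : Om -> B) c :
  0 < pmf P Y c < 1 -> 0 < UDmax Y.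
Proof.
move=> /andP [qc_gt0 qc_lt1]; rewrite /UDmax (bigD1 c) //=.
have rest_ge0 : 0 <= \sum_(y | y != c)
    (pmf P Y y * (1 - pmf P Y y) + (1 - pmf P Y y) * pmf P Y y).
  apply: sumr_ge0 => y _.
  have := pmf_ge0 Y y; have := pmf_le1 Y y.
  by move=> *; apply: addr_ge0; apply: mulr_ge0; lra.
have : 0 < pmf P Y c * (1 - pmf P Y c) by apply: mulr_gt0; lra.
lra.
Qed.

Lemma nonconst_pmf (B : finType) (Y : Om -> B) :
  ~ (exists c : B, forall w, 0 < P w -> Y w = c) ->
  exists c, 0 < pmf P Y c < 1.
Proof.
move=> nonconst.
have [/existsP [w0 Pw0] | /existsPn Pnull] := boolP [exists w, 0 < P w];
  last first.
  have : \sum_w P w = 0.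
    by apply: big1 => w _; apply/le_anti; rewrite P_ge0 andbT leNgt Pnull.
  by rewrite P_sum1 => /eqP; rewrite oner_eq0.
have [/existsP [w1 /andP [Pw1 Yw1]] | /existsPn same] :=
  boolP [exists w, (0 < P w) && (Y w != Y w0)]; last first.
  case: nonconst; exists (Y w0) => w Pw.
  by apply/eqP; move: (same w); rewrite Pw negbK.
exists (Y w0); apply/andP; split.
  by apply: lt_le_trans Pw0 _; rewrite /pmf (bigD1 w0) //= lerDl sumr_ge0.
rewrite -P_sum1 (bigID (fun w => Y w == Y w0)) /= ltrDl.
by apply: lt_le_trans Pw1 _; rewrite (bigD1 w1) //= lerDl sumr_ge0.
Qed.

Lemma UD_self (B : finType) (Y : Om -> B) : UD P Y Y = UDmax Y.
Proof. by apply: UD_eq_max => w w' _ _. Qed.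

Variables (B : finType) (Y : Om -> B).
Hypothesis Y_nonconst : ~ (exists c : B, forall w, 0 < P w -> Y w = c).

Lemma UD_self_gt0 : 0 < UD P Y Y.
Proof. by have [c /UDmax_gt0] := nonconst_pmf Y_nonconst; rewrite UD_self. Qed.

Lemma Dep_le1 (A : finType) (X : Om -> A) : Dep P X Y <= 1.
Proof. by rewrite /Dep ler_pdivrMr ?UD_self_gt0 // mul1r UD_self UD_le_max. Qed.

Lemma Dep_functional (A : finType) (X : Om -> A) :
  (forall w w', 0 < P w -> 0 < P w' -> X w = X w' -> Y w = Y w') ->
  Dep P X Y = 1.
Proof.
move=> Yfun; rewrite /Dep (UD_eq_max Yfun) -UD_self divff //.
by rewrite gt_eqF ?UD_self_gt0.
Qed.

End UniversalDependence.

Lemma sum_split_pair (R : realFieldType) n (F : {set 'I_n} -> R) (i k : 'I_n) :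
  i != k ->
  \sum_(S : {set 'I_n} | i \notin S) F S =
  \sum_(S : {set 'I_n} | (i \notin S) && (k \notin S)) (F S + F (S :|: [set k])).
Proof.
move=> ik; rewrite big_split /= [LHS](bigID (fun S : {set 'I_n} => k \in S)) /=.
rewrite addrC; congr (_ + _).
rewrite (reindex_onto (fun S => S :|: [set k]) (fun S => S :\ k)) /=; last first.
  by move=> S /andP [_ kS]; rewrite setUC setD1K.
apply: eq_bigl => S; have [kS|kS] := boolP (k \in S).
  rewrite andbF; apply/negbTE/negP => /andP [_ /eqP S_eq].
  by move: kS; rewrite -S_eq !inE eqxx.
by rewrite setUC setU1K // !inE (negbTE ik) !eqxx /= andbT.
Qed.

Theorem mainTheorem11 (R : realFieldType) (Om : finType) (P : Om -> R)
  (n : nat) (T : 'I_n -> finType) (X : forall i : 'I_n, Om -> T i)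
  (B : finType) (Y : Om -> B) :
  is_prob P ->
  (* Y is not almost surely constant *)
  ~ (exists c : B, forall w, 0 < P w -> Y w = c) ->
  forall (k : 'I_n) (g : T k -> B),
  (* Y = g(X_k) almost surely *)
  (forall w, 0 < P w -> Y w = g (X k w)) ->
  forall i : 'I_n, FI P X Y i <= FI P X Y k.
Proof.
move=> [P_ge0 P_sum1] Y_nonconst k g Yg i.
have Dep_le1S (S : {set 'I_n}) : DepS P X Y S <= 1 by apply: Dep_le1.
have Dep_k (S : {set 'I_n}) : k \in S -> DepS P X Y S = 1.
  move=> kS; apply: Dep_functional => // w w' Pw Pw' /ffunP /(_ k).
  by rewrite !ffunE kS (Yg w Pw) (Yg w' Pw') => -[->].
have [->|ik] := eqVneq i k; first exact: le_refl.
have ki : k != i by rewrite eq_sym.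
rewrite /FI (sum_split_pair _ ik) (sum_split_pair _ ki) big_andbC.
apply: ler_sum => S /andP [iS kS].
rewrite (Dep_k (S :|: [set k] :|: [set i])) ?(Dep_k (S :|: [set i] :|: [set k]))
  ?(Dep_k (S :|: [set k])) ?inE ?eqxx ?orbT //.
have -> : #|S :|: [set k]| = #|S :|: [set i]|.
  by rewrite ![S :|: _]setUC !cardsU1 iS kS.
have := Dep_le1S (S :|: [set i]); have := Dep_le1S S.
set w0 := (_ / _ : R); set w1 := (_ / (n`!)%:R : R).
have : 0 <= w0 by rewrite divr_ge0 ?ler0n.
have : 0 <= w1 by rewrite divr_ge0 ?ler0n.
nra.
Qed.
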